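(* Let $\mathcal{G}$ be a group prevariety over a finite alphabet $A$. Then $\mathrm{FO}(\mathbb{I}_{\mathcal{G}}) = \mathrm{FO}(<,\mathbb{P}_{\mathcal{G}})$.
   Context: Fix a finite alphabet $A$. A prevariety is a class of regular languages over $A$ containing $\emptyset$ and $A^*$, closed under union, intersection, complement, and under the quotients $u^{-1}L=\{w\mid uw\in L\}$ and $Lu^{-1}=\{w\mid wu\in L\}$. A group prevariety is a prevariety all of whose languages are recognized by morphisms into finite groups. A word $w=a_1\cdots a_n$ is viewed as a structure with domain $\{0,\dots,n+1\}$; positions $1,\dots,n$ are labeled $a_1,\dots,a_n$, and $0,n+1$ are unlabeled; for $i<j$, $w(i,j)=a_{i+1}\cdots a_{j-1}$. First-order formulas use variables over positions, constants $\mathit{min},\mathit{max}$ (interpreted as $0$ and $n+1$), equality, the predicates of the signature, Boolean connectives and quantifiers. Label predicates $a(x)$ ($a\in A$) hold iff position $x$ has label $a$. For a set $\mathbb{S}$ of predicates, $\mathrm{FO}(\mathbb{S})$ is the class of languages defined by first-order sentences over the label predicates and $\mathbb{S}$. Here $<$ is the linear order on positions; $\mathbb{I}_{\mathcal{G}}$ contains, for each $L\in\mathcal{G}$, a binary predicate $I_L$ with $I_L(i,j)$ true iff $i<j$ and $w(i,j)\in L$; $\mathbb{P}_{\mathcal{G}}$ contains, for each $L\in\mathcal{G}$, a unary predicate $P_L$ with $P_L(i)$ true iff $0<i$ and $w(0,i)\in L$. *)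

From mathcomp Require Import all_boot all_fingroup.
Set Implicit Arguments. Unset Strict Implicit. Unset Printing Implicit Defensive.

Section Words.
Variable A : finType.

Definition lang := seq A -> bool.

Definition regular (L : lang) : Prop :=
  exists (Q : finType) (q0 : Q) (delta : Q -> A -> Q) (F : {set Q}),
    forall w, L w = (foldl delta q0 w \in F).

Definition group_recognized (L : lang) : Prop :=
  exists (gT : finGroupType) (phi : seq A -> gT) (F : {set gT}),
    [/\ phi [::] = 1%g,
        (forall u v, phi (u ++ v) = (phi u * phi v)%g) &
        (forall w, L w = (phi w \in F))].

(* A class of languages is a predicate on languages; being a set of
   languages, it is invariant under extensional equality. *)
Definition prevariety (C : lang -> Prop) : Prop :=
     (forall L1 L2, (forall w, L1 w = L2 w) -> C L1 -> C L2)
  /\ (forall L, C L -> regular L)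
  /\ C (fun _ => false) /\ C (fun _ => true)
  /\ (forall L1 L2, C L1 -> C L2 -> C (fun w => L1 w || L2 w))
  /\ (forall L1 L2, C L1 -> C L2 -> C (fun w => L1 w && L2 w))
  /\ (forall L, C L -> C (fun w => ~~ L w))
  /\ (forall L u, C L -> C (fun w => L (u ++ w)))
  /\ (forall L u, C L -> C (fun w => L (w ++ u))).

Definition group_prevariety (C : lang -> Prop) : Prop :=
  prevariety C /\ (forall L, C L -> group_recognized L).

Inductive term := Var of nat | Min | Max.

Inductive form :=
| FEq  of term & term
| FLab of A & term
| FLt  of term & term
| FI   of lang & term & term
| FP   of lang & term
| FNot of form
| FAnd of form & form
| FOr  of form & form
| FEx  of nat & form
| FAll of nat & form.

(* word w = a_1 ... a_n, positions 0 .. n+1 *)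
Definition eval_term (w : seq A) (env : nat -> nat) (t : term) : nat :=
  match t with Var x => env x | Min => 0 | Max => (size w).+1 end.

Definition update (env : nat -> nat) (x i : nat) : nat -> nat :=
  fun k => if k == x then i else env k.

(* w(i,j) = a_{i+1} ... a_{j-1} for i < j *)
Definition infix_word (w : seq A) (i j : nat) : seq A :=
  take (j.-1 - i) (drop i w).

Fixpoint sat (w : seq A) (env : nat -> nat) (f : form) : Prop :=
  match f with
  | FEq t1 t2 => eval_term w env t1 = eval_term w env t2
  | FLab a t => let i := eval_term w env t in
                [/\ 0 < i, i <= size w & nth a w i.-1 = a]
  | FLt t1 t2 => eval_term w env t1 < eval_term w env t2
  | FI L t1 t2 => let i := eval_term w env t1 in let j := eval_term w env t2 in
                  i < j /\ L (infix_word w i j)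
  | FP L t => let i := eval_term w env t in 0 < i /\ L (infix_word w 0 i)
  | FNot g => ~ sat w env g
  | FAnd g h => sat w env g /\ sat w env h
  | FOr g h => sat w env g \/ sat w env h
  | FEx x g => exists i, i <= (size w).+1 /\ sat w (update env x i) g
  | FAll x g => forall i, i <= (size w).+1 -> sat w (update env x i) g
  end.

Definition term_ok (bnd : seq nat) (t : term) : bool :=
  if t is Var x then x \in bnd else true.

Fixpoint scoped (bnd : seq nat) (f : form) : bool :=
  match f with
  | FEq t1 t2 | FLt t1 t2 | FI _ t1 t2 => term_ok bnd t1 && term_ok bnd t2
  | FLab _ t | FP _ t => term_ok bnd t
  | FNot g => scoped bnd g
  | FAnd g h | FOr g h => scoped bnd g && scoped bnd h
  | FEx x g | FAll x g => scoped (x :: bnd) g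
  end.

Definition sentence (f : form) : bool := scoped [::] f.

Fixpoint in_sig_I (G : lang -> Prop) (f : form) : Prop :=
  match f with
  | FEq _ _ | FLab _ _ => True
  | FLt _ _ | FP _ _ => False
  | FI L _ _ => G L
  | FNot g | FEx _ g | FAll _ g => in_sig_I G g
  | FAnd g h | FOr g h => in_sig_I G g /\ in_sig_I G h
  end.

Fixpoint in_sig_ltP (G : lang -> Prop) (f : form) : Prop :=
  match f with
  | FEq _ _ | FLab _ _ | FLt _ _ => True
  | FI _ _ _ => False
  | FP L _ => G L
  | FNot g | FEx _ g | FAll _ g => in_sig_ltP G g
  | FAnd g h | FOr g h => in_sig_ltP G g /\ in_sig_ltP G h
  end.

(* L is defined by the sentence f (the environment is irrelevant). *)
Definition defines (f : form) (L : lang) : Prop :=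
  sentence f /\ forall w, L w <-> sat w (fun _ => 0) f.

Definition FO_I (G : lang -> Prop) (L : lang) : Prop :=
  exists f, in_sig_I G f /\ defines f L.

Definition FO_ltP (G : lang -> Prop) (L : lang) : Prop :=
  exists f, in_sig_ltP G f /\ defines f L.

End Words.

From mathcomp Require Import all_boot all_fingroup cyclic zify.
From Stdlib Require Import Classical.

Set Implicit Arguments. Unset Strict Implicit. Unset Printing Implicit Defensive.

(* Let [phi : A^* -> G] recognize [L], with [G] a finite group.  As
   [w(0,j) = w(0,i) a w(i,j)] where [a] is the label of [i], and [u^(|G|-1) u]
   is sent to [1], the word [w(i,j)] has the same image as
   [(w(0,i) a)^(|G|-1) w(0,j)]; whether the latter is in [L] only depends on
   [a] and on the syntactic classes of [w(0,i)] and [w(0,j)].  There are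
   finitely many classes, each a Boolean combination of quotients of [L], hence
   in the prevariety, so [I_L(x,y)] is a disjunction of formulas
   [P_K(x) /\ a(x) /\ P_K'(y)] (or of [P_K(y)] when [x = min]).  Conversely
   [x < y] is [I_{A^*}(x,y)] and [P_L(x)] is [I_L(min,x)]. *)

Lemma finite_range_representatives (T : eqType) (U : finType) (f : T -> U) :
  exists R : seq T, forall t, exists2 r, r \in R & f r = f t.
Proof.
suff [R HR] : exists R : seq T,
    forall t, f t \in enum U -> exists2 r, r \in R & f r = f t.
  by exists R => t; apply: HR; rewrite mem_enum.
elim: (enum U) => [|g s [R HR]]; first by exists [::].
have [[t0 ft0]|no_t] := classic (exists t, f t = g).
- exists (t0 :: R) => t; rewrite in_cons => /orP [/eqP ->|/HR [r rR fr]].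
    by exists t0; rewrite ?mem_head.
  by exists r; rewrite // in_cons rR orbT.
- exists R => t; rewrite in_cons => /orP [/eqP eg|/HR //].
  by case: no_t; exists t.
Qed.

Section Prevariety.
Variables (A : finType) (G : lang A -> Prop).
Hypothesis HG : prevariety G.

Lemma prevariety_ext L1 L2 : (forall w, L1 w = L2 w) -> G L1 -> G L2.
Proof. by case: HG => ext _; apply: ext. Qed.

Lemma prevariety_full : G (fun _ => true).
Proof. by case: HG => _ [_ [_ []]]. Qed.

Lemma prevariety_and L1 L2 : G L1 -> G L2 -> G (fun w => L1 w && L2 w).
Proof. by case: HG => _ [_ [_ [_ [_ [inter _]]]]]; apply: inter. Qed.

Lemma prevariety_not L : G L -> G (fun w => ~~ L w).
Proof. by case: HG => _ [_ [_ [_ [_ [_ [compl _]]]]]]; apply: compl. Qed.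

Lemma prevariety_quotient L x y : G L -> G (fun w => L (x ++ w ++ y)).
Proof.
case: HG => _ [_ [_ [_ [_ [_ [_ [quotl quotr]]]]]]] GL.
apply: (@prevariety_ext (fun w => L ((x ++ w) ++ y))); first by move=> w; rewrite catA.
exact: quotl (quotr _ _ GL).
Qed.

Lemma prevariety_all (T : eqType) (s : seq T) (F : T -> lang A) :
  (forall t, t \in s -> G (F t)) -> G (fun w => all (fun t => F t w) s).
Proof.
elim: s => [|t s IH] GF; first exact: prevariety_full.
apply: prevariety_and; first by apply: GF; rewrite mem_head.
by apply: IH => t' t's; apply: GF; rewrite in_cons t's orbT.
Qed.

End Prevariety.

Section Formulas.
Variable A : finType.
Implicit Types (f g h : form A) (p q : form A -> Prop) (w : seq A) (bnd : seq nat).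

Definition ff : form A := FLt A Min Min.

Definition bigor (T : Type) (s : seq T) (F : T -> form A) : form A :=
  foldr (fun t f => FOr (F t) f) ff s.

Lemma sat_bigor (T : eqType) (s : seq T) F w env :
  sat w env (bigor s F) <-> exists2 t, t \in s & sat w env (F t).
Proof.
elim: s => [|t s IH] /=; first by split=> [|[]] //; rewrite ltnn.
rewrite IH; split=> [[Ft | [t' t's Ft']] | [t']].
- by exists t; rewrite ?mem_head.
- by exists t'; rewrite // in_cons t's orbT.
- by rewrite in_cons => /orP [/eqP -> | t's] Ft'; [left | right; exists t'].
Qed.

Lemma scoped_bigor (T : eqType) (s : seq T) F bnd :
  (forall t, t \in s -> scoped bnd (F t)) -> scoped bnd (bigor s F).
Proof.
elim: s => [|t s IH] //= sF; rewrite sF ?mem_head //=.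
by apply: IH => t' t's; apply: sF; rewrite in_cons t's orbT.
Qed.

Fixpoint atoms_in p f : Prop :=
  match f with
  | FNot g | FEx _ g | FAll _ g => atoms_in p g
  | FAnd g h | FOr g h => atoms_in p g /\ atoms_in p h
  | _ => p f
  end.

Lemma atoms_in_bigor (T : eqType) (s : seq T) F p :
  p ff -> (forall t, t \in s -> atoms_in p (F t)) -> atoms_in p (bigor s F).
Proof.
move=> p_ff; elim: s => [|t s IH] //= pF; split; first by apply: pF; rewrite mem_head.
by apply: IH => t' t's; apply: pF; rewrite in_cons t's orbT.
Qed.

Definition I_atom (G : lang A -> Prop) f : Prop :=
  match f with FEq _ _ | FLab _ _ => True | FI L _ _ => G L | _ => False end.

Definition ltP_atom (G : lang A -> Prop) f : Prop :=
  match f with FEq _ _ | FLab _ _ | FLt _ _ => True | FP L _ => G L | _ => False end.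

Lemma in_sig_I_atoms G f : in_sig_I G f = atoms_in (I_atom G) f.
Proof. by elim: f => //= *; congruence. Qed.

Lemma in_sig_ltP_atoms G f : in_sig_ltP G f = atoms_in (ltP_atom G) f.
Proof. by elim: f => //= *; congruence. Qed.

Definition env_bounded w (env : nat -> nat) bnd :=
  forall x, x \in bnd -> env x <= (size w).+1.

Lemma eval_term_bounded w env bnd t :
  env_bounded w env bnd -> term_ok bnd t -> eval_term w env t <= (size w).+1.
Proof. by case: t => //= x /[apply]. Qed.

Lemma env_bounded_update w env bnd x i :
  env_bounded w env bnd -> i <= (size w).+1 -> env_bounded w (update env x i) (x :: bnd).
Proof.
move=> env_bnd le_i y; rewrite in_cons /update.
by case: (y == x) => //= /env_bnd.
Qed.

(* Only environments sending the variables in scope to positions of [w] are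
   considered: the translation of [I_L] needs [x <= size w + 1]. *)
Definition translates f f' : Prop :=
  forall bnd, scoped bnd f -> scoped bnd f' /\
    forall w env, env_bounded w env bnd -> (sat w env f <-> sat w env f').

Lemma translates_not g g' : translates g g' -> translates (FNot g) (FNot g').
Proof.
by move=> tr bnd /tr [sc eqv]; split=> // w env /eqv /= ->.
Qed.

Lemma translates_and g g' h h' :
  translates g g' -> translates h h' -> translates (FAnd g h) (FAnd g' h').
Proof.
move=> trg trh bnd /andP [/trg [scg eqg] /trh [sch eqh]].
by split=> [|w env bd /=]; [rewrite /= scg sch | rewrite eqg // eqh].
Qed.

Lemma translates_or g g' h h' :
  translates g g' -> translates h h' -> translates (FOr g h) (FOr g' h').
Proof.
move=> trg trh bnd /andP [/trg [scg eqg] /trh [sch eqh]].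
by split=> [|w env bd /=]; [rewrite /= scg sch | rewrite eqg // eqh].
Qed.

Lemma translates_ex x g g' : translates g g' -> translates (FEx x g) (FEx x g').
Proof.
move=> tr bnd /tr [sc eqv]; split=> // w env bd /=.
by split=> -[i [le_i sat_i]]; exists i; split=> //;
  apply/(eqv _ _ (env_bounded_update (x := x) bd le_i)).
Qed.

Lemma translates_all x g g' : translates g g' -> translates (FAll x g) (FAll x g').
Proof.
move=> tr bnd /tr [sc eqv]; split=> // w env bd /=.
by split=> sat_all i le_i;
  apply/(eqv _ _ (env_bounded_update (x := x) bd le_i)); apply: sat_all.
Qed.

Lemma translates_atoms p q :
  (forall a, p a -> exists2 a', atoms_in q a' & translates a a') ->
  forall f, atoms_in p f -> exists2 f', atoms_in q f' & translates f f'.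
Proof.
move=> tr_atom; elim; try by move=> *; apply: tr_atom.
- by move=> g IH /IH [g' qg' tr]; exists (FNot g'); last exact: translates_not.
- move=> g IHg h IHh [/IHg [g' qg' trg] /IHh [h' qh' trh]].
  by exists (FAnd g' h'); [split | exact: translates_and].
- move=> g IHg h IHh [/IHg [g' qg' trg] /IHh [h' qh' trh]].
  by exists (FOr g' h'); [split | exact: translates_or].
- by move=> x g IH /IH [g' qg' tr]; exists (FEx x g'); last exact: translates_ex.
- by move=> x g IH /IH [g' qg' tr]; exists (FAll x g'); last exact: translates_all.
Qed.

Lemma defines_translates f f' L : translates f f' -> defines f L -> defines f' L.
Proof.
move=> tr [/tr [sc eqv] def]; split=> // w.
by rewrite def; apply: eqv.
Qed.

End Formulas.

Section Words.
Variable A : finType.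

Lemma infix_word_split (w : seq A) i j a : 0 < i -> i < j -> i <= size w ->
  infix_word w 0 j = infix_word w 0 i ++ nth a w i.-1 :: infix_word w i j.
Proof.
move=> i_gt0 lt_ij le_iw; rewrite /infix_word !subn0 !drop0.
rewrite -{1}(cat_take_drop i w) take_cat size_takel // ifN; last by lia.
by rewrite -(prednK i_gt0) (take_nth a) ?cat_rcons //; lia.
Qed.

Lemma label_exists (w : seq A) i : 0 < i -> i <= size w -> exists a, nth a w i.-1 = a.
Proof.
case: w => [|b w] i_gt0 le_iw; first by have := leq_trans i_gt0 le_iw.
by exists (nth b (b :: w) i.-1); apply: set_nth_default; lia.
Qed.

Definition pow_word (n : nat) (v : seq A) : seq A := flatten (nseq n v).

(* The class of [r] for the syntactic congruence of [L]; contexts drawn from a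
   set of representatives of a recognizing morphism suffice. *)
Definition context_class (L : lang A) (R : seq (seq A)) (r : seq A) : lang A :=
  fun u => all (fun c => L (c.1 ++ u ++ c.2) == L (c.1 ++ r ++ c.2))
               [seq (x, y) | x <- R, y <- R].

Lemma prevariety_context_class G L R r :
  prevariety G -> G L -> G (context_class L R r).
Proof.
move=> HG GL; apply: (prevariety_all HG) => c _.
case: (L (c.1 ++ r ++ c.2)).
  apply: (@prevariety_ext _ _ HG (fun u => L (c.1 ++ u ++ c.2))) => [u|].
    by rewrite eqb_id.
  exact: (prevariety_quotient HG).
apply: (@prevariety_ext _ _ HG (fun u => ~~ L (c.1 ++ u ++ c.2))) => [u|].
  by rewrite eqbF_neg.
exact/(prevariety_not HG)/(prevariety_quotient HG).
Qed.

Definition I_translation (L : lang A) (R : seq (seq A)) (n : nat) (s t : term) : form A :=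
  FOr (FAnd (FEq A s Min)
         (bigor [seq r <- R | L r] (fun r => FP (context_class L R r) t)))
      (FAnd (FLt A Min s) (FAnd (FLt A s t)
        (bigor R (fun r1 => bigor (enum A) (fun a =>
           bigor [seq r2 <- R | L (pow_word n (r1 ++ [:: a]) ++ r2)] (fun r2 =>
             FAnd (FP (context_class L R r1) s)
               (FAnd (FLab a s) (FP (context_class L R r2) t)))))))).

Lemma scoped_I_translation L R n s t bnd :
  term_ok bnd s -> term_ok bnd t -> scoped bnd (I_translation L R n s t).
Proof.
move=> s_ok t_ok; rewrite /= s_ok t_ok /=; apply/andP; split.
  by apply: scoped_bigor => r _ /=.
apply: scoped_bigor => r1 _; apply: scoped_bigor => a _.
by apply: scoped_bigor => r2 _ /=; rewrite s_ok t_ok.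
Qed.

Lemma I_translation_atoms G L R n s t :
  prevariety G -> G L -> atoms_in (ltP_atom G) (I_translation L R n s t).
Proof.
move=> HG GL; have G_cls r := prevariety_context_class R r HG GL.
split; split=> //; first by apply: atoms_in_bigor => // r _; apply: G_cls.
split=> //; apply: atoms_in_bigor => // r1 _; apply: atoms_in_bigor => // a _.
by apply: atoms_in_bigor => // r2 _; do !split; apply: G_cls.
Qed.

Section GroupRecognized.
Variables (gT : finGroupType) (phi : seq A -> gT) (F : {set gT}) (L : lang A).
Hypotheses (phi_nil : phi [::] = 1%g)
  (phi_cat : forall u v, phi (u ++ v) = (phi u * phi v)%g)
  (L_phi : forall w, L w = (phi w \in F)).
Variable R : seq (seq A).
Hypothesis R_repr : forall u, exists2 r, r \in R & phi r = phi u.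

Lemma phi_pow_word n v : phi (pow_word n v) = (phi v ^+ n)%g.
Proof.
elim: n => [|n IH]; first by rewrite phi_nil expg0.
by rewrite /pow_word /= phi_cat -/(pow_word n v) IH expgS.
Qed.

Lemma phi_pow_word_inv v : phi (pow_word #|gT|.-1 v ++ v) = 1%g.
Proof.
rewrite phi_cat phi_pow_word -expgSr prednK; last by apply/card_gt0P; exists 1%g.
by have := expg_cardG (in_setT (phi v)); rewrite cardsT.
Qed.

Lemma context_classP r u :
  context_class L R r u -> forall x y, L (x ++ u ++ y) = L (x ++ r ++ y).
Proof.
move=> /allP cls x y.
have [[rx rxR ex] [ry ryR ey]] := (R_repr x, R_repr y).
have /eqP := cls (rx, ry) (allpairs_f _ rxR ryR).
by rewrite !L_phi !phi_cat ex ey.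
Qed.

Lemma context_class_phi r u : phi r = phi u -> context_class L R r u.
Proof. by move=> e; apply/allP => c _; rewrite !L_phi !phi_cat e. Qed.

Lemma context_class_cover u : exists2 r, r \in R & context_class L R r u.
Proof. by have [r rR e] := R_repr u; exists r => //; apply: context_class_phi. Qed.

Lemma mem_lang_classes u :
  L u <-> exists2 r, r \in [seq r <- R | L r] & context_class L R r u.
Proof.
have L_cls r : context_class L R r u -> L u = L r.
  by move/context_classP/(_ [::] [::]); rewrite /= !cats0.
split=> [Lu | [r]]; last by rewrite mem_filter => /andP [Lr _] /L_cls ->.
by have [r rR cls] := context_class_cover u; exists r; rewrite // mem_filter -L_cls ?Lu.
Qed.

(* [pow_word #|gT|.-1 (r1 ++ y)] is an inverse of [x ++ y] modulo [phi], so it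
   cancels the prefix [x ++ y] of the word of class [r2]. *)
Lemma lang_pow_word_prefix x y v r1 r2 :
  context_class L R r1 x -> context_class L R r2 (x ++ y ++ v) ->
  L v = L (pow_word #|gT|.-1 (r1 ++ y) ++ r2).
Proof.
move=> /context_classP cls1 /context_classP cls2.
rewrite -(cats0 r2) -cls2 cats0 cls1 [r1 ++ y ++ v]catA catA.
by rewrite !L_phi phi_cat phi_pow_word_inv mul1g.
Qed.

Lemma sat_I_translation w env s t :
  eval_term w env s <= (size w).+1 -> eval_term w env t <= (size w).+1 ->
  sat w env (FI L s t) <-> sat w env (I_translation L R #|gT|.-1 s t).
Proof.
rewrite /=; set i := eval_term w env s; set j := eval_term w env t => le_i le_j.
have [-> | i_gt0] := posnP i.
  split=> [[j_gt0 /mem_lang_classes [r rL cls]]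
          | [[_ /sat_bigor [r rL [j_gt0 cls]]] | []//]].
    by left; split=> //; apply/sat_bigor; exists r.
  by split=> //; apply/mem_lang_classes; exists r.
split=> [[lt_ij Lv] | [[i0 _] | [_ [lt_ij]]]]; last first.
- move=> /sat_bigor [r1 _ /sat_bigor [a _ /sat_bigor [r2]]].
  rewrite mem_filter => /andP [Lp _] /= [[_ cls1] [[_ le_iw la] [_ cls2]]].
  rewrite (infix_word_split a i_gt0 lt_ij le_iw) la in cls2.
  by rewrite (lang_pow_word_prefix (y := [:: a]) cls1 cls2).
- by move: i_gt0; rewrite i0.
have le_iw : i <= size w by lia.
have [a la] := label_exists i_gt0 le_iw.
have [r1 r1R cls1] := context_class_cover (infix_word w 0 i).
have [r2 r2R cls2] := context_class_cover (infix_word w 0 j).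
right; split=> //; split=> //; apply/sat_bigor; exists r1 => //.
apply/sat_bigor; exists a; rewrite ?mem_enum //; apply/sat_bigor; exists r2.
  rewrite (infix_word_split a i_gt0 lt_ij le_iw) la in cls2.
  by rewrite mem_filter r2R andbT -(lang_pow_word_prefix (y := [:: a]) cls1 cls2).
by do !split=> //; lia.
Qed.

End GroupRecognized.

Lemma translate_I_atom (G : lang A -> Prop) : group_prevariety G ->
  forall a, I_atom G a -> exists2 a', atoms_in (ltP_atom G) a' & translates a a'.
Proof.
case=> HG G_group; case => // [t1 t2 _ | b t _ | L s t GL].
- by exists (FEq A t1 t2).
- by exists (FLab b t).
have [gT [phi [F [phi_nil phi_cat L_phi]]]] := G_group L GL.
have [R R_repr] := finite_range_representatives phi.
exists (I_translation L R #|gT|.-1 s t); first exact: I_translation_atoms.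
move=> bnd /andP [s_ok t_ok]; split; first exact: scoped_I_translation.
move=> w env bd; apply: (sat_I_translation phi_nil phi_cat L_phi R_repr);
  exact: eval_term_bounded bd _.
Qed.

Lemma translate_ltP_atom (G : lang A -> Prop) : G (fun _ => true) ->
  forall a, ltP_atom G a -> exists2 a', atoms_in (I_atom G) a' & translates a a'.
Proof.
move=> G_full; case => // [t1 t2 _ | b t _ | t1 t2 _ | L t GL].
- by exists (FEq A t1 t2).
- by exists (FLab b t).
- exists (FI (fun _ => true) t1 t2) => // bnd sc.
  by split=> // w env _ /=; split=> [|[]].
- by exists (FI L Min t) => // bnd sc; split.
Qed.

End Words.

Theorem lemma6p3 (A : finType) (G : lang A -> Prop) :
  group_prevariety G -> forall L : lang A, FO_I G L <-> FO_ltP G L.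
Proof.
move=> HG L; split=> -[f [sig def]].
- rewrite in_sig_I_atoms in sig.
  have [f' sig' tr] := translates_atoms (translate_I_atom HG) sig.
  by exists f'; rewrite in_sig_ltP_atoms; split; last exact: defines_translates tr def.
- rewrite in_sig_ltP_atoms in sig.
  have G_full := prevariety_full HG.1.
  have [f' sig' tr] := translates_atoms (translate_ltP_atom G_full) sig.
  by exists f'; rewrite in_sig_I_atoms; split; last exact: defines_translates tr def.
Qed.
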